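(* Let $X,Y$ be Scott domains quantified, respectively, by partial metrics $p_X,p_Y$. Then the cartesian product $X\times Y$ (with the componentwise order) is quantified by the partial metric $p_{X\times Y}:=\frac12(p_X+p_Y)$, i.e. $p_{X\times Y}(\langle x,y\rangle,\langle x',y'\rangle)=\frac12\big(p_X(x,x')+p_Y(y,y')\big)$.
   Context: A partial metric (PM) on $X$ is $p:X\times X\to[0,+\infty]$ with $p(x,x)\leq p(x,y)$; $p(x,x)=p(x,y)=p(y,y)\Rightarrow x=y$; $p(x,y)=p(y,x)$; $p(x,y)\leq p(x,z)+p(z,y)-p(z,z)$. Open balls $B^p_\epsilon(x)=\{y\mid p(y,x)<p(x,x)+\epsilon\}$, and $\mathcal O_p(X)$ is the topology of unions of open balls. In a dcpo, $x\ll y$ iff every directed $\Delta$ with $y\leq\bigvee\Delta$ contains some $d\geq x$; a basis is a $B\subseteq X$ with $\{b\in B\mid b\ll x\}$ directed with join $x$ for every $x$; an element $x$ is compact if $x\ll x$. A domain is a dcpo with a countable basis; it is bounded complete if every finite subset having an upper bound has a join; it is algebraic if it has a basis of compact elements. A Scott domain is a bounded complete algebraic domain. The Scott topology $\mathcal O_\sigma(X)$ consists of upper sets $U$ with $x\in U\Rightarrow\exists y\ll x,\ y\in U$. A dcpo $X$ is quantified by $p$ if $\mathcal O_\sigma(X)=\mathcal O_p(X)$. *)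

From Stdlib Require Import Reals List.
From Coquelicot Require Import Rbar.
Open Scope R_scope.

Section Defs.
Context {X : Type} (le : X -> X -> Prop).

Definition is_poset : Prop :=
  (forall x, le x x) /\
  (forall x y, le x y -> le y x -> x = y) /\
  (forall x y z, le x y -> le y z -> le x z).

Definition directed (D : X -> Prop) : Prop :=
  (exists d, D d) /\
  (forall a b, D a -> D b -> exists c, D c /\ le a c /\ le b c).

Definition is_lub (D : X -> Prop) (s : X) : Prop :=
  (forall d, D d -> le d s) /\ (forall u, (forall d, D d -> le d u) -> le s u).

Definition is_dcpo : Prop :=
  is_poset /\ forall D, directed D -> exists s, is_lub D s.

Definition way_below (x y : X) : Prop :=
  forall D s, directed D -> is_lub D s -> le y s -> exists d, D d /\ le x d.

Definition compact (x : X) : Prop := way_below x x.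

Definition is_basis (B : X -> Prop) : Prop :=
  forall x, directed (fun b => B b /\ way_below b x) /\
            is_lub (fun b => B b /\ way_below b x) x.

Definition countable_set (B : X -> Prop) : Prop :=
  exists g : X -> nat, forall a b, B a -> B b -> g a = g b -> a = b.

Definition is_domain : Prop :=
  is_dcpo /\ exists B, is_basis B /\ countable_set B.

Definition bounded_complete : Prop :=
  forall l : list X, (exists u, forall a, In a l -> le a u) ->
    exists s, is_lub (fun a => In a l) s.

Definition algebraic : Prop :=
  is_domain /\ exists B, is_basis B /\ forall b, B b -> compact b.

Definition scott_domain : Prop :=
  is_domain /\ bounded_complete /\ algebraic.

Definition scott_open (U : X -> Prop) : Prop :=
  (forall x y, U x -> le x y -> U y) /\
  (forall x, U x -> exists y, way_below y x /\ U y).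

End Defs.

Section PM.
Context {X : Type} (p : X -> X -> Rbar).

(* partial metric with values in [0,+oo]; the triangle inequality is written
   without subtraction: p(x,y) + p(z,z) <= p(x,z) + p(z,y). *)
Definition partial_metric : Prop :=
  (forall x y, Rbar_le (Finite 0) (p x y)) /\
  (forall x y, Rbar_le (p x x) (p x y)) /\
  (forall x y, p x x = p x y -> p x y = p y y -> x = y) /\
  (forall x y, p x y = p y x) /\
  (forall x y z, Rbar_le (Rbar_plus (p x y) (p z z)) (Rbar_plus (p x z) (p z y))).

Definition open_ball (x : X) (eps : R) (y : X) : Prop :=
  Rbar_lt (p y x) (Rbar_plus (p x x) (Finite eps)).

Definition p_open (U : X -> Prop) : Prop :=
  exists F : X -> R -> Prop,
    (forall c e, F c e -> 0 < e) /\
    (forall y, U y <-> exists c e, F c e /\ open_ball c e y).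

End PM.

Definition quantified {X : Type} (le : X -> X -> Prop) (p : X -> X -> Rbar) : Prop :=
  is_dcpo le /\ partial_metric p /\ (forall U, scott_open le U <-> p_open p U).

Definition prod_le {X Y : Type} (leX : X -> X -> Prop) (leY : Y -> Y -> Prop)
  (a b : X * Y) : Prop := leX (fst a) (fst b) /\ leY (snd a) (snd b).

Definition prod_pm {X Y : Type} (pX : X -> X -> Rbar) (pY : Y -> Y -> Rbar)
  (a b : X * Y) : Rbar :=
  Rbar_mult (Finite (/ 2)) (Rbar_plus (pX (fst a) (fst b)) (pY (snd a) (snd b))).

(** The Scott topology of a product of algebraic domains is the product of the
    Scott topologies: a basic Scott neighbourhood of [(x, y)] is [↑c × ↑d] for
    compact [c << x] and [d << y].  On the metric side, a ball of
    [p = (pX + pY) / 2] around [(x, y)] contains the box of the radius-[e]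
    balls around [x] and [y], and is contained in the box of the radius-[2e]
    balls; so [p] induces the product of the topologies of [pX] and [pY].
    Since each factor topology is the Scott topology, so is the product one.
    Quantification forces finite self-distances (every point lies in some
    ball), so each point is the centre of balls of every radius. *)

From Stdlib Require Import Reals Lra.
From Coquelicot Require Import Rbar.
(* Imported last, so that [compact] and [is_lub] are the domain-theoretic
   notions rather than those of Reals. *)

Open Scope R_scope.

Definition image {A B : Type} (f : A -> B) (D : A -> Prop) (b : B) : Prop :=
  exists a, D a /\ f a = b.

Definition rectangle {X Y : Type} (V : X -> Prop) (W : Y -> Prop) (z : X * Y) : Prop :=
  V (fst z) /\ W (snd z).

Definition product_open {X Y : Type} (OX : (X -> Prop) -> Prop) (OY : (Y -> Prop) -> Prop)
  (U : X * Y -> Prop) : Prop :=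
  forall z, U z -> exists V W, OX V /\ OY W /\ rectangle V W z /\
    forall w, rectangle V W w -> U w.

Lemma product_open_ext {X Y : Type} (OX OX' : (X -> Prop) -> Prop)
  (OY OY' : (Y -> Prop) -> Prop) U :
  (forall V, OX V <-> OX' V) -> (forall W, OY W <-> OY' W) ->
  product_open OX OY U <-> product_open OX' OY' U.
Proof.
  intros EX EY. unfold product_open.
  split; intros HU z Uz; destruct (HU z Uz) as [V [W [HV [HW HVW]]]];
    exists V, W; rewrite EX, EY in *; auto.
Qed.

Section Order.
Context {X : Type} (le : X -> X -> Prop).
Hypothesis poset : is_poset le.

Lemma way_below_le x y : way_below le x y -> le x y.
Proof.
  destruct poset as [refl _]. intros Hxy.
  destruct (Hxy (fun z => z = y) y) as [d [-> Hd]]; auto.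
  - split; [now exists y|]. intros a b -> ->. exists y. auto.
  - split; [now intros d ->|]. intros u Hu. now apply Hu.
Qed.

Lemma compact_upset_scott_open c : compact le c -> scott_open le (le c).
Proof.
  destruct poset as [refl [_ trans]]. intros Hc. split; [eauto|].
  intros x Hcx. exists c. split; [|apply refl].
  intros D s HD Hs Hxs. apply (Hc D s HD Hs). eauto.
Qed.

End Order.

Lemma directed_image {A B : Type} (leA : A -> A -> Prop) (leB : B -> B -> Prop)
  (f : A -> B) D :
  (forall u v, leA u v -> leB (f u) (f v)) -> directed leA D -> directed leB (image f D).
Proof.
  intros mono [[d Hd] HD]. split; [now exists (f d), d|].
  intros _ _ [a [Ha <-]] [b [Hb <-]].
  destruct (HD a b Ha Hb) as [c [Hc [Hac Hbc]]].
  exists (f c). split; [now exists c | auto].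
Qed.

Section ProductOrder.
Context {X Y : Type} (leX : X -> X -> Prop) (leY : Y -> Y -> Prop).
Local Notation le := (prod_le leX leY).

Lemma is_poset_prod : is_poset leX -> is_poset leY -> is_poset le.
Proof.
  intros [rX [aX tX]] [rY [aY tY]]. unfold prod_le. split; [|split].
  - intros [x y]. simpl. auto.
  - intros [x y] [x' y'] [H1 H2] [H3 H4]. simpl in *. f_equal; auto.
  - intros [x y] [x' y'] [x'' y''] [H1 H2] [H3 H4]. simpl in *. eauto.
Qed.

Lemma directed_fst D : directed le D -> directed leX (image fst D).
Proof. apply directed_image. now intros u v []. Qed.

Lemma directed_snd D : directed le D -> directed leY (image snd D).
Proof. apply directed_image. now intros u v []. Qed.

Lemma is_lub_prod_image D s t :
  is_lub leX (image fst D) s -> is_lub leY (image snd D) t -> is_lub le D (s, t).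
Proof.
  intros [Hs Hs'] [Ht Ht']. split.
  - intros d Hd. split; [apply Hs | apply Ht]; now exists d.
  - intros u Hu. split; [apply Hs' | apply Ht']; intros _ [d [Hd <-]]; now apply Hu.
Qed.

Lemma is_dcpo_prod : is_dcpo leX -> is_dcpo leY -> is_dcpo le.
Proof.
  intros [posX lubX] [posY lubY]. split; [now apply is_poset_prod|].
  intros D HD.
  destruct (lubX _ (directed_fst D HD)) as [s Hs].
  destruct (lubY _ (directed_snd D HD)) as [t Ht].
  exists (s, t). now apply is_lub_prod_image.
Qed.

Lemma directed_rectangle A B :
  directed leX A -> directed leY B -> directed le (rectangle A B).
Proof.
  intros [[a0 Ha0] HA] [[b0 Hb0] HB]. split; [now exists (a0, b0)|].
  intros [a1 b1] [a2 b2] [Ha1 Hb1] [Ha2 Hb2]. simpl in *.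
  destruct (HA a1 a2 Ha1 Ha2) as [a [Ha [Ha1a Ha2a]]].
  destruct (HB b1 b2 Hb1 Hb2) as [b [Hb [Hb1b Hb2b]]].
  exists (a, b). repeat split; auto.
Qed.

Lemma is_lub_rectangle A B s t : directed leX A -> directed leY B ->
  is_lub leX A s -> is_lub leY B t -> is_lub le (rectangle A B) (s, t).
Proof.
  intros [[a0 Ha0] _] [[b0 Hb0] _] [Hs Hs'] [Ht Ht']. split.
  - intros [a b] [Ha Hb]. split; simpl; auto.
  - intros u Hu. split.
    + apply Hs'. intros a Ha. exact (proj1 (Hu (a, b0) (conj Ha Hb0))).
    + apply Ht'. intros b Hb. exact (proj2 (Hu (a0, b) (conj Ha0 Hb))).
Qed.

Lemma way_below_pair a b x y : is_dcpo leX -> is_dcpo leY ->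
  way_below leX a x -> way_below leY b y -> way_below le (a, b) (x, y).
Proof.
  intros [[_ [_ tX]] lubX] [[_ [_ tY]] lubY] Hax Hby D u HD Hu [Hxu Hyu].
  destruct (lubX _ (directed_fst D HD)) as [s Hs].
  destruct (lubY _ (directed_snd D HD)) as [t Ht].
  assert (Hust : le u (s, t)) by (apply Hu; now apply is_lub_prod_image).
  destruct Hust as [Hus Hut].
  destruct (Hax _ s (directed_fst D HD) Hs (tX _ _ _ Hxu Hus)) as [_ [[d1 [Hd1 <-]] Ha]].
  destruct (Hby _ t (directed_snd D HD) Ht (tY _ _ _ Hyu Hut)) as [_ [[d2 [Hd2 <-]] Hb]].
  destruct (proj2 HD d1 d2 Hd1 Hd2) as [d [Hd [[Hd1d _] [_ Hd2d]]]].
  exists d. split; [|split]; eauto.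
Qed.

Section Algebraic.
Hypothesis dcpoX : is_dcpo leX.
Hypothesis dcpoY : is_dcpo leY.
Hypothesis algX : exists B, is_basis leX B /\ forall b, B b -> compact leX b.
Hypothesis algY : exists B, is_basis leY B /\ forall b, B b -> compact leY b.

Lemma product_open_of_scott_open U :
  scott_open le U -> product_open (scott_open leX) (scott_open leY) U.
Proof.
  destruct dcpoX as [[rX [_ tX]] _], dcpoY as [[rY [_ tY]] _].
  destruct algX as [BX [basX compX]], algY as [BY [basY compY]].
  intros [Uup Uwb] [x y] Uxy.
  destruct (Uwb _ Uxy) as [w [Hw Uw]].
  destruct (basX x) as [dirX lubX], (basY y) as [dirY lubY].
  destruct (Hw _ (x, y) (directed_rectangle _ _ dirX dirY)
              (is_lub_rectangle _ _ _ _ dirX dirY lubX lubY) (conj (rX x) (rY y)))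
    as [[c d] [[[Bc Hcx] [Bd Hdy]] [Hwc Hwd]]].
  exists (leX c), (leY d). split; [|split; [|split]].
  - apply compact_upset_scott_open; auto. apply dcpoX.
  - apply compact_upset_scott_open; auto. apply dcpoY.
  - split; apply way_below_le; auto; [apply dcpoX | apply dcpoY].
  - intros [a b] [Hca Hdb]. apply (Uup w); auto. split; simpl in *; eauto.
Qed.

Lemma scott_open_of_product_open U :
  product_open (scott_open leX) (scott_open leY) U -> scott_open le U.
Proof.
  intros HU. split.
  - intros z z' Uz [Hz1 Hz2].
    destruct (HU z Uz) as [V [W [[Vup _] [[Wup _] [[Vz Wz] VWU]]]]].
    apply VWU. split; [eapply Vup | eapply Wup]; eauto.
  - intros [x y] Uxy.
    destruct (HU _ Uxy) as [V [W [[_ Vwb] [[_ Wwb] [[Vx Wy] VWU]]]]].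
    destruct (Vwb x Vx) as [a [Hax Va]], (Wwb y Wy) as [b [Hby Wb]].
    exists (a, b). split; [now apply way_below_pair|]. apply VWU. now split.
Qed.

Lemma scott_open_prod U :
  scott_open le U <-> product_open (scott_open leX) (scott_open leY) U.
Proof.
  split; [apply product_open_of_scott_open | apply scott_open_of_product_open].
Qed.

End Algebraic.
End ProductOrder.

Definition diag_finite {X : Type} (p : X -> X -> Rbar) : Prop :=
  forall x, exists t, p x x = Finite t.

Section PartialMetric.
Context {X : Type} (p : X -> X -> Rbar).

Lemma open_ball_p_open c e : 0 < e -> p_open p (open_ball p c e).
Proof.
  intros He. exists (fun c' e' => c' = c /\ e' = e). split.
  - now intros c' e' [_ ->].
  - intros y. split; [now exists c, e | now intros [c' [e' [[-> ->] Hy]]]].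
Qed.

Lemma open_ball_center c e t : p c c = Finite t -> 0 < e -> open_ball p c e c.
Proof. intros Ht He. unfold open_ball. rewrite Ht. simpl. lra. Qed.

Lemma open_ball_mono c e e' y : e <= e' -> open_ball p c e y -> open_ball p c e' y.
Proof. unfold open_ball. intros Hee'. destruct (p y c), (p c c); simpl; try tauto; lra. Qed.

Lemma p_open_of_nbhd U : diag_finite p ->
  (forall x, U x -> exists d, 0 < d /\ forall w, open_ball p x d w -> U w) -> p_open p U.
Proof.
  intros fin HU. exists (fun c e => 0 < e /\ forall w, open_ball p c e w -> U w). split.
  - now intros c e [].
  - intros y. split.
    + intros Uy. destruct (HU y Uy) as [d [Hd Hball]], (fin y) as [t Ht].
      exists y, d. split; [now split | now apply open_ball_center with t].
    + intros [c [e [[_ Hball] Hy]]]. now apply Hball.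
Qed.

Hypothesis pm : partial_metric p.

Lemma open_ball_finite c e y : open_ball p c e y ->
  exists r t, p y c = Finite r /\ p c c = Finite t /\ r < t + e.
Proof.
  destruct pm as [_ [refl [_ [sym _]]]]. unfold open_ball.
  pose proof (refl c y) as Hcy. rewrite (sym c y) in Hcy.
  destruct (p y c) as [r| |], (p c c) as [t| |]; simpl in *; try tauto. eauto.
Qed.

Lemma open_ball_diag_finite c e y : open_ball p c e y -> exists t, p y y = Finite t.
Proof.
  intros Hy. destruct (open_ball_finite c e y Hy) as [r [t [Hr _]]].
  destruct pm as [nn [refl _]]. pose proof (refl y c) as Hyy. pose proof (nn y y) as Hnn.
  rewrite Hr in Hyy. destruct (p y y) as [s| |]; simpl in *; try tauto. eauto.
Qed.

Lemma open_ball_shrink c e y : open_ball p c e y ->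
  exists d, 0 < d /\ forall w, open_ball p y d w -> open_ball p c e w.
Proof.
  intros Hy. destruct (open_ball_finite c e y Hy) as [r [t [Hr [Ht Hrt]]]].
  exists (t + e - r). split; [lra|]. intros w Hw.
  destruct (open_ball_finite y _ w Hw) as [q [s [Hq [Hs Hqs]]]].
  destruct pm as [_ [_ [_ [_ tri]]]]. pose proof (tri w c y) as Htri.
  rewrite Hq, Hs, Hr in Htri. unfold open_ball. rewrite Ht.
  destruct (p w c); simpl in *; try tauto. lra.
Qed.

Lemma p_open_nbhd U x : p_open p U -> U x ->
  exists d, 0 < d /\ forall w, open_ball p x d w -> U w.
Proof.
  intros [F [_ HF]] Ux. destruct (proj1 (HF x) Ux) as [c [e [Fce Hx]]].
  destruct (open_ball_shrink c e x Hx) as [d [Hd Hsub]].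
  exists d. split; [exact Hd|]. intros w Hw. apply HF. exists c, e. auto.
Qed.

End PartialMetric.

Lemma quantified_diag_finite {X : Type} (le : X -> X -> Prop) (p : X -> X -> Rbar) :
  is_domain le -> quantified le p -> diag_finite p.
Proof.
  intros [_ [B [basB _]]] [_ [pm open_eq]] x.
  assert (Htop : p_open p (fun _ => True)).
  { apply open_eq. split; [auto|]. intros z _.
    destruct (basB z) as [[[b [_ Hb]] _] _]. eauto. }
  destruct Htop as [F [_ HF]]. destruct (proj1 (HF x) I) as [c [e [_ Hx]]].
  now apply (open_ball_diag_finite p pm c e).
Qed.

Definition half_sum (a b : Rbar) : Rbar :=
  match a, b with
  | Finite r, Finite s => Finite ((r + s) / 2)
  | _, _ => p_infty
  end.

Lemma Rbar_nonneg_cases a : Rbar_le (Finite 0) a -> (exists r, a = Finite r) \/ a = p_infty.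
Proof. destruct a; simpl; intros; eauto; contradiction. Qed.

Ltac nonneg_cases :=
  repeat match goal with
  | H : Rbar_le (Finite 0) ?a |- _ =>
      is_var a; destruct (Rbar_nonneg_cases a H) as [[? ->] | ->]
  end.

Lemma Rbar_plus_nonneg a b :
  Rbar_le (Finite 0) a -> Rbar_le (Finite 0) b -> Rbar_le (Finite 0) (Rbar_plus a b).
Proof. intros; nonneg_cases; simpl in *; lra || tauto. Qed.

Lemma Rbar_mult_half_plus a b : Rbar_le (Finite 0) a -> Rbar_le (Finite 0) b ->
  Rbar_mult (Finite (/ 2)) (Rbar_plus a b) = half_sum a b.
Proof.
  intros; nonneg_cases; cbn [Rbar_plus Rbar_plus' half_sum]; try (simpl; f_equal; lra);
    rewrite Rbar_mult_comm; apply is_Rbar_mult_unique, is_Rbar_mult_p_infty_pos;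
    simpl; lra.
Qed.

Lemma half_sum_nonneg a b : Rbar_le (Finite 0) a -> Rbar_le (Finite 0) b ->
  Rbar_le (Finite 0) (half_sum a b).
Proof. intros; nonneg_cases; simpl in *; lra || tauto. Qed.

Lemma half_sum_le_compat a b a' b' : Rbar_le (Finite 0) a -> Rbar_le (Finite 0) b ->
  Rbar_le a a' -> Rbar_le b b' -> Rbar_le (half_sum a b) (half_sum a' b').
Proof.
  intros Ha Hb; nonneg_cases; destruct a', b'; simpl in *; try tauto; lra.
Qed.

Lemma half_sum_plus a b a' b' : Rbar_le (Finite 0) a -> Rbar_le (Finite 0) b ->
  Rbar_le (Finite 0) a' -> Rbar_le (Finite 0) b' ->
  Rbar_plus (half_sum a b) (half_sum a' b') = half_sum (Rbar_plus a a') (Rbar_plus b b').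
Proof. intros; nonneg_cases; simpl; try reflexivity; f_equal; lra. Qed.

Lemma half_sum_le_eq a b a' b' r : Rbar_le a a' -> Rbar_le b b' ->
  half_sum a b = Finite r -> half_sum a b = half_sum a' b' -> a = a' /\ b = b'.
Proof.
  destruct a, b; simpl; intros Ha Hb Hr; try discriminate.
  destruct a', b'; simpl in *; try tauto; try discriminate.
  intros E. injection E as E. split; f_equal; lra.
Qed.

Section ProductMetric.
Context {X Y : Type} (pX : X -> X -> Rbar) (pY : Y -> Y -> Rbar).
Hypothesis pmX : partial_metric pX.
Hypothesis pmY : partial_metric pY.
Local Notation p := (prod_pm pX pY).

Lemma prod_pm_pair x y x' y' : p (x, y) (x', y') = half_sum (pX x x') (pY y y').
Proof. apply Rbar_mult_half_plus; [apply pmX | apply pmY]. Qed.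

Hypothesis finX : diag_finite pX.
Hypothesis finY : diag_finite pY.

Lemma diag_finite_prod : diag_finite p.
Proof.
  intros [x y]. destruct (finX x) as [t Ht], (finY y) as [u Hu].
  exists ((t + u) / 2). now rewrite prod_pm_pair, Ht, Hu.
Qed.

Lemma partial_metric_prod : partial_metric p.
Proof.
  pose proof pmX as [nnX [reflX [sepX [symX triX]]]].
  pose proof pmY as [nnY [reflY [sepY [symY triY]]]].
  split; [|split; [|split; [|split]]].
  - intros [x y] [x' y']. rewrite prod_pm_pair. now apply half_sum_nonneg.
  - intros [x y] [x' y']. rewrite !prod_pm_pair. now apply half_sum_le_compat.
  - intros [x y] [x' y']. rewrite !prod_pm_pair. intros E E'.
    destruct (diag_finite_prod (x, y)) as [t Ht], (diag_finite_prod (x', y')) as [t' Ht'].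
    rewrite prod_pm_pair in Ht, Ht'.
    destruct (half_sum_le_eq _ _ _ _ t (reflX x x') (reflY y y') Ht E) as [Ex Ey].
    assert (E'' : half_sum (pX x' x') (pY y' y') = half_sum (pX x' x) (pY y' y))
      by now rewrite (symX x' x), (symY y' y).
    destruct (half_sum_le_eq _ _ _ _ t' (reflX x' x) (reflY y' y) Ht' E'') as [Ex' Ey'].
    rewrite (symX x' x) in Ex'. rewrite (symY y' y) in Ey'.
    f_equal; [apply sepX | apply sepY]; congruence.
  - intros [x y] [x' y']. now rewrite !prod_pm_pair, symX, symY.
  - intros [x y] [x' y'] [x'' y'']. rewrite !prod_pm_pair, !half_sum_plus by auto.
    apply half_sum_le_compat; auto using Rbar_plus_nonneg.
Qed.

Lemma open_ball_prod_of_balls x y e w1 w2 :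
  open_ball pX x e w1 -> open_ball pY y e w2 -> open_ball p (x, y) e (w1, w2).
Proof.
  intros H1 H2.
  destruct (open_ball_finite pX pmX x e w1 H1) as [r1 [t1 [R1 [T1 L1]]]].
  destruct (open_ball_finite pY pmY y e w2 H2) as [r2 [t2 [R2 [T2 L2]]]].
  unfold open_ball. rewrite !prod_pm_pair, R1, T1, R2, T2. simpl. lra.
Qed.

Lemma open_ball_prod_balls x y e w1 w2 : open_ball p (x, y) e (w1, w2) ->
  open_ball pX x (2 * e) w1 /\ open_ball pY y (2 * e) w2.
Proof.
  destruct pmX as [_ [reflX [_ [symX _]]]], pmY as [_ [reflY [_ [symY _]]]].
  destruct (finX x) as [t1 T1], (finY y) as [t2 T2].
  pose proof (reflX x w1) as L1. pose proof (reflY y w2) as L2.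
  rewrite (symX x w1), T1 in L1. rewrite (symY y w2), T2 in L2.
  unfold open_ball. rewrite !prod_pm_pair, T1, T2.
  destruct (pX w1 x), (pY w2 y); simpl in *; try tauto. intros; split; lra.
Qed.

Lemma p_open_prod U : p_open p U <-> product_open (p_open pX) (p_open pY) U.
Proof.
  split.
  - intros HU [x y] Uxy.
    destruct (p_open_nbhd p partial_metric_prod U (x, y) HU Uxy) as [d [Hd Hsub]].
    destruct (finX x) as [t Ht], (finY y) as [u Hu].
    exists (open_ball pX x d), (open_ball pY y d).
    split; [|split; [|split]]; try now apply open_ball_p_open.
    + split; [apply open_ball_center with t | apply open_ball_center with u]; auto.
    + intros [w1 w2] [H1 H2]. now apply Hsub, open_ball_prod_of_balls.
  - intros HU. apply p_open_of_nbhd; [apply diag_finite_prod|].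
    intros [x y] Uxy.
    destruct (HU _ Uxy) as [V [W [HV [HW [[Vx Wy] VWU]]]]].
    destruct (p_open_nbhd pX pmX V x HV Vx) as [d1 [Hd1 B1]].
    destruct (p_open_nbhd pY pmY W y HW Wy) as [d2 [Hd2 B2]].
    pose proof (Rmin_l d1 d2) as Hmin1. pose proof (Rmin_r d1 d2) as Hmin2.
    pose proof (Rmin_pos d1 d2 Hd1 Hd2) as Hmin.
    exists (Rmin d1 d2 / 2). split; [lra|].
    intros [w1 w2] Hw. apply open_ball_prod_balls in Hw as [H1 H2].
    apply VWU. split; [apply B1 | apply B2]; eapply open_ball_mono;
      [| exact H1 | | exact H2]; lra.
Qed.

End ProductMetric.

Theorem mainTheorem6 (X Y : Type) (leX : X -> X -> Prop) (leY : Y -> Y -> Prop)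
  (pX : X -> X -> Rbar) (pY : Y -> Y -> Rbar) :
  scott_domain leX -> scott_domain leY ->
  quantified leX pX -> quantified leY pY ->
  quantified (prod_le leX leY) (prod_pm pX pY).
Proof.
  intros [domX [_ [_ algX]]] [domY [_ [_ algY]]] qX qY.
  pose proof qX as [dcpoX [pmX openX]]. pose proof qY as [dcpoY [pmY openY]].
  pose proof (quantified_diag_finite leX pX domX qX) as finX.
  pose proof (quantified_diag_finite leY pY domY qY) as finY.
  split; [now apply is_dcpo_prod|].
  split; [now apply partial_metric_prod|].
  intros U.
  rewrite (scott_open_prod leX leY dcpoX dcpoY algX algY U).
  rewrite (p_open_prod pX pY pmX pmY finX finY U).
  now apply product_open_ext.
Qed.
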